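(* Let $\Lambda,\Theta$ be Young functions of class $C^2$, and set $i_\lambda:=\inf_{t>0}\frac{t\Lambda''(t)}{\Lambda'(t)}$, $s_\lambda:=\sup_{t>0}\frac{t\Lambda''(t)}{\Lambda'(t)}$, $i_\theta:=\inf_{t>0}\frac{t\Theta''(t)}{\Theta'(t)}$, $s_\theta:=\sup_{t>0}\frac{t\Theta''(t)}{\Theta'(t)}$. Suppose $0<i_\lambda\le s_\lambda\le i_\theta\le s_\theta<+\infty$. Then $\Upsilon:=\Theta\circ\Lambda^{-1}$ is convex. If, moreover, $s_\Lambda<i_\Theta$, then $\Upsilon$ is a Young function.
   Context: A Young function is a convex $\Lambda:[0,\infty)\to[0,\infty)$ with $\Lambda(t)=0$ iff $t=0$, $\lim_{t\to0^+}\Lambda(t)/t=0$ and $\lim_{t\to\infty}\Lambda(t)/t=\infty$. For a differentiable Young function $\Lambda$, $i_\Lambda:=\inf_{t>0}\frac{t\Lambda'(t)}{\Lambda(t)}$ and $s_\Lambda:=\sup_{t>0}\frac{t\Lambda'(t)}{\Lambda(t)}$. *)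

From Stdlib Require Import Reals.
From Coquelicot Require Import Coquelicot.
Open Scope R_scope.

(* A function on [0,oo) is modelled as f : R -> R; only its values on [0,oo) matter. *)

Definition convex_nonneg (f : R -> R) : Prop :=
  forall x y l, 0 <= x -> 0 <= y -> 0 <= l <= 1 ->
    f (l * x + (1 - l) * y) <= l * f x + (1 - l) * f y.

Definition Young (f : R -> R) : Prop :=
  convex_nonneg f /\
  (forall t, 0 <= t -> 0 <= f t) /\
  (forall t, 0 <= t -> (f t = 0 <-> t = 0)) /\
  filterlim (fun t => f t / t) (at_right 0) (locally 0) /\
  is_lim (fun t => f t / t) p_infty p_infty.

Definition C2_pos (f : R -> R) : Prop :=
  forall t, 0 < t ->
    ex_derive f t /\ ex_derive (Derive f) t /\ continuous (Derive (Derive f)) t.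

(* i_F := inf_{t>0} t F'(t)/F(t),  s_F := sup_{t>0} t F'(t)/F(t)  (in Rbar) *)
Definition i_up (f : R -> R) : Rbar :=
  Glb_Rbar (fun x => exists t, 0 < t /\ x = t * Derive f t / f t).
Definition s_up (f : R -> R) : Rbar :=
  Lub_Rbar (fun x => exists t, 0 < t /\ x = t * Derive f t / f t).

Definition i_low (f : R -> R) : Rbar :=
  Glb_Rbar (fun x => exists t, 0 < t /\ x = t * Derive (Derive f) t / Derive f t).
Definition s_low (f : R -> R) : Rbar :=
  Lub_Rbar (fun x => exists t, 0 < t /\ x = t * Derive (Derive f) t / Derive f t).

From Stdlib Require Import Reals Lra.
From Coquelicot Require Import Coquelicot.
Open Scope R_scope.

(* Write q = Theta' / Lambda'.  Its logarithmic derivative is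
   (t Theta''/Theta' - t Lambda''/Lambda') / t >= 0, so q is nondecreasing, and the
   Cauchy mean value argument bounds the increments of Theta by q(t) times those of
   Lambda, from above on the left of t and from below on its right.  In the variable
   s = Lambda(t) this says that the chord slopes of Upsilon = Theta o Lambda^-1 left of s
   are at most q(t) and those right of s at least q(t): Upsilon is convex.
   If moreover s_Lambda <= a < b <= i_Theta, then ln (Theta/Lambda) - (b - a) ln is
   nondecreasing, so Theta/Lambda tends to 0 at 0+ and to +oo at +oo; these are the limits
   of Upsilon(s)/s = (Theta/Lambda)(Lambda^-1 s). *)

Lemma at_right_0_pos : at_right 0 (fun u => 0 < u).
Proof. exists (mkposreal 1 Rlt_0_1). intros u _ Hu. exact Hu. Qed.

Section YoungFunction.

Variable f : R -> R.
Hypothesis Yf : Young f.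

Lemma Young_0 : f 0 = 0.
Proof. destruct Yf as (_ & _ & f_eq0 & _). apply f_eq0; lra. Qed.

Lemma Young_eq0 t : 0 <= t -> f t = 0 <-> t = 0.
Proof. destruct Yf as (_ & _ & f_eq0 & _). exact (f_eq0 t). Qed.

Lemma Young_ge0 t : 0 <= t -> 0 <= f t.
Proof. destruct Yf as (_ & f_ge0 & _). exact (f_ge0 t). Qed.

Lemma Young_pos t : 0 < t -> 0 < f t.
Proof.
  intros Ht. destruct (Young_ge0 t ltac:(lra)) as [|Hft%eq_sym]; [assumption |].
  apply (Young_eq0 t ltac:(lra)) in Hft; lra.
Qed.

Lemma Young_lt x y : 0 <= x -> x < y -> f x < f y.
Proof.
  intros Hx Hxy. destruct Yf as [f_convex _].
  pose proof (Young_pos y ltac:(lra)) as Hfy.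
  set (l := x / y).
  assert (Hx_eq : x = l * y + (1 - l) * 0) by (unfold l; field; lra).
  assert (Hl : 0 <= l < 1) by nra.
  pose proof (f_convex y 0 l ltac:(lra) ltac:(lra) ltac:(lra)) as Hconv.
  rewrite <- Hx_eq, Young_0 in Hconv. nra.
Qed.

Lemma Young_lt_id_near_0 : at_right 0 (fun u => f u < u).
Proof.
  destruct Yf as (_ & _ & _ & f_div_cvg & _).
  apply (filter_imp (fun u => 0 < u /\ f u / u < 1)).
  - intros u [Hu Hdiv]. apply (Rmult_lt_compat_r u) in Hdiv; [| lra].
    field_simplify in Hdiv; lra.
  - apply (filter_and _ _ at_right_0_pos), (f_div_cvg (fun v => v < 1)).
    exists (mkposreal 1 Rlt_0_1). intros v Hv%Rabs_lt_between'. simpl in Hv. lra.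
Qed.

Lemma Young_cvg_0 : filterlim f (at_right 0) (locally 0).
Proof.
  apply (filterlim_le_le (fun _ => 0) f (fun u => u) 0).
  - apply (filter_imp (fun u => 0 < u /\ f u < u)).
    + intros u [Hu Hfu]. split; [apply Young_ge0 |]; lra.
    + exact (filter_and _ _ at_right_0_pos Young_lt_id_near_0).
  - apply filterlim_const.
  - apply (filterlim_filter_le_1 (F := locally 0)); [apply filter_le_within | apply filterlim_id].
Qed.

End YoungFunction.

Definition low_index (f : R -> R) (t : R) : R := t * Derive (Derive f) t / Derive f t.
Definition up_index (f : R -> R) (t : R) : R := t * Derive f t / f t.

Lemma i_low_le f t : 0 < t -> Rbar_le (i_low f) (low_index f t).
Proof. intros Ht. apply (proj1 (Glb_Rbar_correct _)). now exists t. Qed.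

Lemma s_low_ge f t : 0 < t -> Rbar_le (low_index f t) (s_low f).
Proof. intros Ht. apply (proj1 (Lub_Rbar_correct _)). now exists t. Qed.

Lemma i_up_le f t : 0 < t -> Rbar_le (i_up f) (up_index f t).
Proof. intros Ht. apply (proj1 (Glb_Rbar_correct _)). now exists t. Qed.

Lemma s_up_ge f t : 0 < t -> Rbar_le (up_index f t) (s_up f).
Proof. intros Ht. apply (proj1 (Lub_Rbar_correct _)). now exists t. Qed.

Lemma Rbar_lt_separate (x y : Rbar) : Rbar_lt x y ->
  exists a b : R, a < b /\ Rbar_le x a /\ Rbar_le b y.
Proof.
  destruct x as [x | |], y as [y | |]; simpl; intros Hxy; try contradiction.
  - exists x, y. simpl. lra.
  - exists x, (x + 1). simpl. lra.
  - exists (y - 1), y. simpl. lra.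
  - exists 0, 1. simpl. lra.
Qed.

Lemma is_lim_affine_infty (k c : R) (l : Rbar) : 0 < c -> l = p_infty \/ l = m_infty ->
  is_lim (fun y => k + c * y) l l.
Proof.
  intros Hc Hl.
  eapply is_lim_plus; [apply is_lim_const | apply is_lim_scal_l, is_lim_id |].
  destruct Hl as [-> | ->]; simpl; destruct Rle_dec; try lra;
    destruct Rle_lt_or_eq_dec; try lra; reflexivity.
Qed.

Section RightInverse.

Variables h hinv : R -> R.
Hypothesis h_lt : forall x y, 0 <= x -> x < y -> h x < h y.
Hypothesis hinv_spec : forall s, 0 <= s -> 0 <= hinv s /\ h (hinv s) = s.

Lemma h_le x y : 0 <= x -> x <= y -> h x <= h y.
Proof. intros Hx [Hxy | <-]; [left; apply h_lt |]; lra. Qed.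

Lemma hinv_lt_of_lt s t : 0 <= s -> 0 <= t -> s < h t -> hinv s < t.
Proof.
  intros Hs Ht Hst. destruct (hinv_spec s Hs) as [Hinv_ge0 Hinv].
  apply Rnot_le_lt. intros Hle. pose proof (h_le t (hinv s) Ht Hle). lra.
Qed.

Lemma lt_hinv_of_lt s t : 0 <= s -> 0 <= t -> h t < s -> t < hinv s.
Proof.
  intros Hs Ht Hts. destruct (hinv_spec s Hs) as [Hinv_ge0 Hinv].
  apply Rnot_le_lt. intros Hle. pose proof (h_le (hinv s) t Hinv_ge0 Hle). lra.
Qed.

Lemma hinv_lt s1 s2 : 0 <= s1 -> s1 < s2 -> hinv s1 < hinv s2.
Proof.
  intros Hs1 Hs12. destruct (hinv_spec s1 Hs1) as [Hinv_ge0 Hinv].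
  apply lt_hinv_of_lt; lra.
Qed.

Hypothesis h_0 : h 0 = 0.

Lemma hinv_pos s : 0 < s -> 0 < hinv s.
Proof. intros Hs. apply lt_hinv_of_lt; lra. Qed.

Lemma hinv_cvg_0 : filterlim hinv (at_right 0) (at_right 0).
Proof.
  intros P [eps HP].
  assert (Heps : 0 < h eps) by (rewrite <- h_0; apply h_lt; [lra | apply cond_pos]).
  exists (mkposreal _ Heps). intros s Hs%Rabs_lt_between' Hs_pos. simpl in Hs.
  pose proof (hinv_pos s Hs_pos).
  assert (hinv s < eps) by (apply hinv_lt_of_lt; [lra | pose proof (cond_pos eps) |]; lra).
  apply HP; [apply Rabs_lt_between'; lra | assumption].
Qed.

Lemma hinv_cvg_infty : filterlim hinv (Rbar_locally p_infty) (Rbar_locally p_infty).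
Proof.
  intros P [M HP]. exists (h (Rmax M 0)). intros s Hs.
  pose proof (h_le 0 (Rmax M 0) ltac:(lra) (Rmax_r M 0)) as H0.
  apply HP. apply (Rle_lt_trans _ (Rmax M 0)); [apply Rmax_l |].
  apply lt_hinv_of_lt; [| apply Rmax_r |]; lra.
Qed.

End RightInverse.

Lemma le_of_derive_nonneg (g dg : R -> R) (a b : R) : a <= b ->
  (forall x, a <= x <= b -> is_derive g x (dg x)) ->
  (forall x, a <= x <= b -> 0 <= dg x) -> g a <= g b.
Proof.
  intros Hab Hder Hdg.
  destruct (MVT_gen g a b dg) as (c & Hc & Hincr);
    rewrite ?Rmin_left, ?Rmax_right in * by lra.
  - intros x Hx. apply Hder. lra.
  - intros x Hx. apply continuity_pt_filterlim.
    apply (ex_derive_continuous (K := R_AbsRing) (V := R_NormedModule)).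
    exists (dg x). apply Hder. lra.
  - pose proof (Rmult_le_pos (dg c) (b - a) (Hdg c Hc) ltac:(lra)). lra.
Qed.

Lemma Derive_ge0_of_increasing (g : R -> R) (t : R) :
  (forall x y, 0 <= x -> x < y -> g x < g y) -> 0 < t -> ex_derive g t ->
  0 <= Derive g t.
Proof.
  intros g_lt Ht [l Hl]. rewrite (is_derive_unique g t l Hl).
  apply is_derive_Reals in Hl.
  apply Rnot_lt_le. intros Hneg.
  destruct (Hl (- l) ltac:(lra)) as [d Hd].
  assert (Hd2 : 0 < d / 2) by (pose proof (cond_pos d); lra).
  specialize (Hd (d / 2) ltac:(lra) ltac:(rewrite Rabs_pos_eq; lra)).
  apply Rabs_def2 in Hd.
  pose proof (g_lt t (t + d / 2) ltac:(lra) ltac:(lra)).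
  assert (0 < (g (t + d / 2) - g t) / (d / 2)) by (apply Rdiv_lt_0_compat; lra).
  lra.
Qed.

Lemma quotient_nondecreasing (F G : R -> R) :
  (forall t, 0 < t -> ex_derive F t /\ ex_derive G t) ->
  (forall t, 0 < t -> 0 < G t) ->
  (forall t, 0 < t -> F t * Derive G t <= Derive F t * G t) ->
  forall x y, 0 < x -> x <= y -> F x / G x <= F y / G y.
Proof.
  intros Hder G_pos Hcross x y Hx Hxy.
  apply (le_of_derive_nonneg (fun t => F t / G t)
    (fun t => (Derive F t * G t - F t * Derive G t) / G t ^ 2)); [assumption | |].
  - intros t Ht. destruct (Hder t ltac:(lra)) as [HF HG].
    pose proof (G_pos t ltac:(lra)).
    apply is_derive_div; [apply Derive_correct.. | lra]; assumption.
  - intros t Ht. pose proof (Hcross t ltac:(lra)). pose proof (G_pos t ltac:(lra)).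
    apply Rdiv_le_0_compat; [lra | apply pow_lt; lra].
Qed.

Lemma convex_nonneg_of_three_point (U : R -> R) :
  (forall s1 s s2, 0 <= s1 -> s1 < s -> s < s2 ->
     (s2 - s1) * U s <= (s2 - s) * U s1 + (s - s1) * U s2) ->
  convex_nonneg U.
Proof.
  intros H3.
  assert (Hlt : forall x y l, 0 <= x -> x < y -> 0 < l < 1 ->
            U (l * x + (1 - l) * y) <= l * U x + (1 - l) * U y).
  { intros x y l Hx Hxy Hl.
    pose proof (H3 x (l * x + (1 - l) * y) y Hx ltac:(nra) ltac:(nra)) as H.
    replace (y - (l * x + (1 - l) * y)) with (l * (y - x)) in H by ring.
    replace (l * x + (1 - l) * y - x) with ((1 - l) * (y - x)) in H by ring.
    apply (Rmult_le_reg_l (y - x)); lra. }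
  intros x y l Hx Hy Hl.
  destruct (Req_dec l 0) as [-> | Hl0].
  { replace (0 * x + (1 - 0) * y) with y by ring. lra. }
  destruct (Req_dec l 1) as [-> | Hl1].
  { replace (1 * x + (1 - 1) * y) with x by ring. lra. }
  destruct (Rtotal_order x y) as [Hxy | [<- | Hxy]].
  - apply Hlt; lra.
  - replace (l * x + (1 - l) * x) with x by ring. lra.
  - replace (l * x + (1 - l) * y) with ((1 - l) * y + (1 - (1 - l)) * x) by ring.
    pose proof (Hlt y x (1 - l) Hy Hxy ltac:(lra)). lra.
Qed.

Section DerivativeQuotient.

Variables g h : R -> R.
Hypothesis g_der : forall t, 0 < t -> ex_derive g t.
Hypothesis h_der : forall t, 0 < t -> ex_derive h t.
Hypothesis h'_pos : forall t, 0 < t -> 0 < Derive h t.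

Let q t := Derive g t / Derive h t.

Lemma Derive_g_eq t : 0 < t -> Derive g t = q t * Derive h t.
Proof. intros Ht. pose proof (h'_pos t Ht). unfold q. field. lra. Qed.

Lemma increment_ge x y K : 0 < x -> x <= y -> (forall z, x <= z <= y -> K <= q z) ->
  K * (h y - h x) <= g y - g x.
Proof.
  intros Hx Hxy HK.
  enough (g x - K * h x <= g y - K * h y) by lra.
  apply (le_of_derive_nonneg (fun z => g z - K * h z)
    (fun z => Derive g z - K * Derive h z)); [assumption | |].
  - intros z Hz. apply (is_derive_minus g (fun u => K * h u)).
    + apply Derive_correct, g_der. lra.
    + apply is_derive_scal, Derive_correct, h_der. lra.
  - intros z Hz. rewrite Derive_g_eq by lra.
    pose proof (HK z Hz). pose proof (h'_pos z ltac:(lra)). nra.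
Qed.

Lemma increment_le x y K : 0 < x -> x <= y -> (forall z, x <= z <= y -> q z <= K) ->
  g y - g x <= K * (h y - h x).
Proof.
  intros Hx Hxy HK.
  enough (K * h x - g x <= K * h y - g y) by lra.
  apply (le_of_derive_nonneg (fun z => K * h z - g z)
    (fun z => K * Derive h z - Derive g z)); [assumption | |].
  - intros z Hz. apply (is_derive_minus (fun u => K * h u) g).
    + apply is_derive_scal, Derive_correct, h_der. lra.
    + apply Derive_correct, g_der. lra.
  - intros z Hz. rewrite Derive_g_eq by lra.
    pose proof (HK z Hz). pose proof (h'_pos z ltac:(lra)). nra.
Qed.

Hypothesis g_cvg_0 : filterlim g (at_right 0) (locally (g 0)).
Hypothesis h_ge_h0 : forall u, 0 < u -> h 0 <= h u.

(* At [x = 0] only the right limit of [g] is available: bound the increment on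
   [[u, y]] and let [u -> 0+]. *)
Lemma increment_le_from_nonneg x y K : 0 <= x -> x <= y -> 0 < y -> 0 <= K ->
  (forall z, 0 < z <= y -> q z <= K) ->
  g y - g x <= K * (h y - h x).
Proof.
  intros [Hx | <-] Hxy Hy HK Hq.
  { apply increment_le; [lra | lra |]. intros z Hz. apply Hq. lra. }
  enough (Rbar_le (g y - K * (h y - h 0)) (g 0)) by (simpl in *; lra).
  apply (filterlim_le (F := at_right 0) (fun _ => g y - K * (h y - h 0)) g);
    [| apply filterlim_const | exact g_cvg_0].
  exists (mkposreal y Hy). intros u Hu%Rabs_lt_between' Hu_pos. simpl in Hu.
  pose proof (increment_le u y K Hu_pos ltac:(lra) ltac:(intros; apply Hq; lra)).
  pose proof (h_ge_h0 u Hu_pos). nra.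
Qed.

End DerivativeQuotient.

Section ConvexComposition.

Variables g h hinv : R -> R.
Hypothesis g_der : forall t, 0 < t -> ex_derive g t.
Hypothesis h_der : forall t, 0 < t -> ex_derive h t.
Hypothesis g'_ge0 : forall t, 0 < t -> 0 <= Derive g t.
Hypothesis h'_pos : forall t, 0 < t -> 0 < Derive h t.
Hypothesis quotient_nondecr : forall x y, 0 < x -> x <= y ->
  Derive g x / Derive h x <= Derive g y / Derive h y.
Hypothesis g_cvg_0 : filterlim g (at_right 0) (locally (g 0)).
Hypothesis h_lt : forall x y, 0 <= x -> x < y -> h x < h y.
Hypothesis hinv_spec : forall s, 0 <= s -> 0 <= hinv s /\ h (hinv s) = s.

Lemma convex_nonneg_comp_inverse : convex_nonneg (fun s => g (hinv s)).
Proof.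
  apply convex_nonneg_of_three_point. intros s1 s s2 Hs1 Hs1s Hss2.
  pose proof (hinv_lt h hinv h_lt hinv_spec s1 s Hs1 Hs1s) as Ht1t.
  pose proof (hinv_lt h hinv h_lt hinv_spec s s2 ltac:(lra) Hss2) as Htt2.
  destruct (hinv_spec s1 Hs1) as [Ht1 Hs1_eq].
  destruct (hinv_spec s ltac:(lra)) as [Ht Hs_eq].
  destruct (hinv_spec s2 ltac:(lra)) as [Ht2 Hs2_eq].
  set (t1 := hinv s1) in *. set (t := hinv s) in *. set (t2 := hinv s2) in *.
  set (K := Derive g t / Derive h t).
  assert (HK : 0 <= K).
  { pose proof (g'_ge0 t ltac:(lra)). pose proof (h'_pos t ltac:(lra)).
    apply Rdiv_le_0_compat; lra. }
  assert (Hleft : g t - g t1 <= K * (s - s1)).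
  { rewrite <- Hs_eq, <- Hs1_eq.
    apply (increment_le_from_nonneg g h); try assumption; try lra.
    - intros u Hu. apply Rlt_le, h_lt; lra.
    - intros z Hz. apply quotient_nondecr; lra. }
  assert (Hright : K * (s2 - s) <= g t2 - g t).
  { rewrite <- Hs_eq, <- Hs2_eq.
    apply (increment_ge g h); try assumption; try lra.
    intros z Hz. apply quotient_nondecr; lra. }
  nra.
Qed.

End ConvexComposition.

Section IndexGap.

Variables Lam Th : R -> R.
Hypothesis YL : Young Lam.
Hypothesis YT : Young Th.
Hypothesis Lam_der : forall t, 0 < t -> ex_derive Lam t.
Hypothesis Th_der : forall t, 0 < t -> ex_derive Th t.
Variables a b : R.
Hypothesis Hab : a < b.
Hypothesis Lam_up_index : forall t, 0 < t -> up_index Lam t <= a.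
Hypothesis Th_up_index : forall t, 0 < t -> b <= up_index Th t.

Let rho t := Th t / Lam t.

Lemma ratio_pos t : 0 < t -> 0 < rho t.
Proof. intros Ht. apply Rdiv_lt_0_compat; apply Young_pos; assumption. Qed.

Lemma ln_ratio_growth x y : 0 < x -> x <= y ->
  ln (rho x) - (b - a) * ln x <= ln (rho y) - (b - a) * ln y.
Proof.
  intros Hx Hxy.
  apply (le_of_derive_nonneg (fun t => ln (rho t) - (b - a) * ln t)
    (fun t => (up_index Th t - up_index Lam t - (b - a)) / t)); [assumption | |].
  - intros t Ht.
    pose proof (Young_pos Th YT t ltac:(lra)). pose proof (Young_pos Lam YL t ltac:(lra)).
    pose proof (Th_der t ltac:(lra)). pose proof (Lam_der t ltac:(lra)).
    unfold rho, up_index. auto_derive.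
    + repeat split; try assumption; try lra. apply Rdiv_lt_0_compat; lra.
    + change (Derive (fun u => Th u) t) with (Derive Th t).
      change (Derive (fun u => Lam u) t) with (Derive Lam t).
      field. repeat split; lra.
  - intros t Ht.
    pose proof (Lam_up_index t ltac:(lra)). pose proof (Th_up_index t ltac:(lra)).
    apply Rdiv_le_0_compat; lra.
Qed.

Lemma ratio_cvg_0 : filterlim rho (at_right 0) (locally 0).
Proof.
  assert (Hbound : at_right 0 (fun t => ln (rho t) <= ln (rho 1) + (b - a) * ln t)).
  { exists (mkposreal 1 Rlt_0_1). intros t Ht%Rabs_lt_between' Ht_pos. simpl in Ht.
    pose proof (ln_ratio_growth t 1 Ht_pos ltac:(lra)) as Hgrowth.
    rewrite ln_1 in Hgrowth. lra. }
  assert (Hln : filterlim (fun t => ln (rho t)) (at_right 0) (Rbar_locally m_infty)).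
  { apply (filterlim_le_m_infty (fun t => ln (rho 1) + (b - a) * ln t) _ Hbound).
    apply (filterlim_comp _ _ _ ln (fun y => ln (rho 1) + (b - a) * y) _ _ _ is_lim_ln_0).
    apply is_lim_affine_infty; [lra | now right]. }
  apply (filterlim_ext_loc (fun t => exp (ln (rho t)))).
  - apply (filter_imp (fun t => 0 < t)); [| exact at_right_0_pos].
    intros t Ht. apply exp_ln, ratio_pos, Ht.
  - exact (filterlim_comp _ _ _ _ exp _ _ _ Hln is_lim_exp_m).
Qed.

Lemma ratio_cvg_infty : is_lim rho p_infty p_infty.
Proof.
  assert (Hbound : Rbar_locally p_infty
                     (fun t => ln (rho 1) + (b - a) * ln t <= ln (rho t))).
  { exists 1. intros t Ht.
    pose proof (ln_ratio_growth 1 t ltac:(lra) ltac:(lra)) as Hgrowth.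
    rewrite ln_1 in Hgrowth. lra. }
  assert (Hln : filterlim (fun t => ln (rho t)) (Rbar_locally p_infty) (Rbar_locally p_infty)).
  { apply (filterlim_ge_p_infty (fun t => ln (rho 1) + (b - a) * ln t) _ Hbound).
    apply (filterlim_comp _ _ _ ln (fun y => ln (rho 1) + (b - a) * y) _ _ _ is_lim_ln_p).
    apply is_lim_affine_infty; [lra | now left]. }
  apply (filterlim_ext_loc (fun t => exp (ln (rho t)))).
  - exists 0. intros t Ht. apply exp_ln, ratio_pos, Ht.
  - exact (filterlim_comp _ _ _ _ exp _ _ _ Hln is_lim_exp_p).
Qed.

End IndexGap.

Section YoungComposition.

Variables Lam Th LamInv : R -> R.
Hypothesis YL : Young Lam.
Hypothesis YT : Young Th.
Hypothesis LamInv_spec : forall s, 0 <= s -> 0 <= LamInv s /\ Lam (LamInv s) = s.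

Let Lam_lt := Young_lt Lam YL.

Lemma LamInv_eq0 s : 0 <= s -> LamInv s = 0 <-> s = 0.
Proof.
  intros Hs. destruct (LamInv_spec s Hs) as [Hge Heq].
  split; intros Hzero.
  - rewrite <- Heq, Hzero. apply Young_0, YL.
  - apply (Young_eq0 Lam YL _ Hge). rewrite Heq. exact Hzero.
Qed.

Lemma comp_inverse_div_eq : at_right 0
  (fun s => Th (LamInv s) / Lam (LamInv s) = Th (LamInv s) / s).
Proof.
  apply (filter_imp (fun s => 0 < s)); [| exact at_right_0_pos].
  intros s Hs. now rewrite (proj2 (LamInv_spec s ltac:(lra))).
Qed.

Lemma Young_comp_inverse :
  convex_nonneg (fun s => Th (LamInv s)) ->
  filterlim (fun t => Th t / Lam t) (at_right 0) (locally 0) ->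
  is_lim (fun t => Th t / Lam t) p_infty p_infty ->
  Young (fun s => Th (LamInv s)).
Proof.
  intros Hconv Hcvg_0 Hcvg_infty.
  split; [exact Hconv | split; [| split; [| split]]].
  - intros s Hs. apply (Young_ge0 Th YT), LamInv_spec, Hs.
  - intros s Hs. rewrite <- (LamInv_eq0 s Hs).
    apply (Young_eq0 Th YT), LamInv_spec, Hs.
  - apply (filterlim_ext_loc _ _ comp_inverse_div_eq).
    exact (filterlim_comp _ _ _ LamInv _ _ _ _
             (hinv_cvg_0 Lam LamInv Lam_lt LamInv_spec (Young_0 Lam YL)) Hcvg_0).
  - apply (filterlim_ext_loc (fun s => Th (LamInv s) / Lam (LamInv s))).
    + exists 0. intros s Hs. now rewrite (proj2 (LamInv_spec s ltac:(lra))).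
    + exact (filterlim_comp _ _ _ LamInv _ _ _ _
               (hinv_cvg_infty Lam LamInv Lam_lt LamInv_spec (Young_0 Lam YL)) Hcvg_infty).
Qed.

End YoungComposition.

Lemma Derive_pos_of_low_index (f : R -> R) (t : R) : Young f -> ex_derive f t -> 0 < t ->
  0 < low_index f t -> 0 < Derive f t.
Proof.
  intros Yf Hder Ht Hindex.
  destruct (Derive_ge0_of_increasing f t (Young_lt f Yf) Ht Hder) as [| Hzero]; [assumption |].
  (* at a critical point the index is [t * _ / 0 = 0] *)
  unfold low_index in Hindex. rewrite <- Hzero, Rdiv_0_r in Hindex. lra.
Qed.

Lemma Derive_quotient_nondecreasing (Lam Th : R -> R) : C2_pos Lam -> C2_pos Th ->
  (forall t, 0 < t -> 0 < Derive Lam t) -> (forall t, 0 < t -> 0 < Derive Th t) ->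
  (forall t, 0 < t -> low_index Lam t <= low_index Th t) ->
  forall x y, 0 < x -> x <= y ->
    Derive Th x / Derive Lam x <= Derive Th y / Derive Lam y.
Proof.
  intros CL CT Lam'_pos Th'_pos Hindex.
  apply quotient_nondecreasing.
  - intros t Ht. split; [apply CT | apply CL]; exact Ht.
  - exact Lam'_pos.
  - intros t Ht. pose proof (Lam'_pos t Ht). pose proof (Th'_pos t Ht).
    replace (Derive Th t * Derive (Derive Lam) t)
      with (low_index Lam t * (Derive Lam t * Derive Th t / t)) by (unfold low_index; field; lra).
    replace (Derive (Derive Th) t * Derive Lam t)
      with (low_index Th t * (Derive Lam t * Derive Th t / t)) by (unfold low_index; field; lra).
    apply Rmult_le_compat_r; [| exact (Hindex t Ht)].
    apply Rdiv_le_0_compat; nra.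
Qed.

Lemma convex_nonneg_comp_inverse_of_low_index (Lam Th LamInv : R -> R) :
  Young Lam -> Young Th -> C2_pos Lam -> C2_pos Th ->
  (forall t, 0 < t -> 0 < low_index Lam t) ->
  (forall t, 0 < t -> low_index Lam t <= low_index Th t) ->
  (forall s, 0 <= s -> 0 <= LamInv s /\ Lam (LamInv s) = s) ->
  convex_nonneg (fun s => Th (LamInv s)).
Proof.
  intros YL YT CL CT Lam_index_pos index_le LamInv_spec.
  assert (Lam'_pos : forall t, 0 < t -> 0 < Derive Lam t)
    by (intros t Ht; apply Derive_pos_of_low_index; auto; apply CL, Ht).
  assert (Th'_pos : forall t, 0 < t -> 0 < Derive Th t).
  { intros t Ht. apply Derive_pos_of_low_index; [exact YT | apply CT, Ht | exact Ht |].
    pose proof (Lam_index_pos t Ht). pose proof (index_le t Ht). lra. }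
  apply (convex_nonneg_comp_inverse Th Lam LamInv); try assumption.
  - intros t Ht. apply CT, Ht.
  - intros t Ht. apply CL, Ht.
  - intros t Ht. left. auto.
  - apply Derive_quotient_nondecreasing; assumption.
  - rewrite (Young_0 Th YT). apply Young_cvg_0, YT.
  - apply Young_lt, YL.
Qed.

Theorem proposition2p11 (Lam Th LamInv : R -> R) :
  Young Lam -> Young Th -> C2_pos Lam -> C2_pos Th ->
  Rbar_lt (Finite 0) (i_low Lam) ->
  Rbar_le (i_low Lam) (s_low Lam) ->
  Rbar_le (s_low Lam) (i_low Th) ->
  Rbar_le (i_low Th) (s_low Th) ->
  Rbar_lt (s_low Th) p_infty ->
  (* LamInv is the inverse of Lam : [0,oo) -> [0,oo) *)
  (forall s, 0 <= s -> 0 <= LamInv s /\ Lam (LamInv s) = s) ->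
  convex_nonneg (fun s => Th (LamInv s)) /\
  (Rbar_lt (s_up Lam) (i_up Th) -> Young (fun s => Th (LamInv s))).
Proof.
  intros YL YT CL CT Hi_Lam _ Hs_Lam_i_Th _ _ LamInv_spec.
  assert (Lam_index_pos : forall t, 0 < t -> 0 < low_index Lam t)
    by (intros t Ht; exact (Rbar_lt_le_trans _ _ _ Hi_Lam (i_low_le Lam t Ht))).
  assert (index_le : forall t, 0 < t -> low_index Lam t <= low_index Th t).
  { intros t Ht. change (Rbar_le (low_index Lam t) (low_index Th t)).
    apply (Rbar_le_trans _ _ _ (s_low_ge Lam t Ht)).
    exact (Rbar_le_trans _ _ _ Hs_Lam_i_Th (i_low_le Th t Ht)). }
  assert (Hconv : convex_nonneg (fun s => Th (LamInv s)))
    by now apply (convex_nonneg_comp_inverse_of_low_index Lam).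
  split; [exact Hconv |]. intros Hgap.
  destruct (Rbar_lt_separate _ _ Hgap) as (a & b & Hab & Ha & Hb).
  assert (Lam_up : forall t, 0 < t -> up_index Lam t <= a)
    by (intros t Ht; exact (Rbar_le_trans _ _ _ (s_up_ge Lam t Ht) Ha)).
  assert (Th_up : forall t, 0 < t -> b <= up_index Th t)
    by (intros t Ht; exact (Rbar_le_trans _ _ _ Hb (i_up_le Th t Ht))).
  assert (Lam_der : forall t, 0 < t -> ex_derive Lam t) by (intros t Ht; apply CL, Ht).
  assert (Th_der : forall t, 0 < t -> ex_derive Th t) by (intros t Ht; apply CT, Ht).
  apply (Young_comp_inverse Lam); try assumption.
  - exact (ratio_cvg_0 Lam Th YL YT Lam_der Th_der a b Hab Lam_up Th_up).
  - exact (ratio_cvg_infty Lam Th YL YT Lam_der Th_der a b Hab Lam_up Th_up).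
Qed.
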